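(* Let $C=C_\Delta\oplus\mathbb R^{n-m}\subset\mathbb R^n$, where $C_\Delta\subset\mathbb R^m$ is an $m$-dimensional simplicial cone. Let $E_1,\dots,E_m$ be the facets of $C$. Let $\mathbf P\subset C$ be a finite lattice set with $P=\operatorname{Conv}\mathbf P$, and assume $\mathbf P\not\subset E_i$ for each $i$. Consider the off-coordinate polytopes $$D_i=\operatorname{Conv}(\mathbf P\setminus E_i)\ \ (1\le i\le m),\qquad D_i=\operatorname{Conv}(\mathbf P)\ \ (m<i\le n).$$ Then: 1. Each $D_i$ is a daughter polytope of $\mathbf P$, with $\mathcal D(D_i)=\{P\cap E_i\}$ if $P\cap E_i\neq\emptyset$ and $i\le m$, and $\mathcal D(D_i)=\emptyset$ otherwise. 2. The number of $D_i$ meeting a face $F$ of $P$ equals the dimension of the minimal face of $C$ containing $F$. 3. Consequently $D_1,\dots,D_n$ are semi-interlaced in $\mathbf P$, and their sutures are exactly the V-faces of $P$.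
   Context: **V-face.** For a polytope $P$ contained in a cone $C$, a face $F$ of $P$ is a V-face if there is a face $Q$ of $C$ with $F\subset Q$ and $\dim F=\dim Q$. **Daughter polytope.** For a nonempty polytope $D$ with vertices in $\mathbf P$, $\mathcal D(D)$ is the set of inclusion-maximal faces of $P$ disjoint from $D$. $D$ is a daughter polytope of $\mathbf P$ if: 1. distinct members of $\mathcal D(D)$ are disjoint; 2. $D=\operatorname{Conv}(\mathbf P\setminus\bigcup_{G\in\mathcal D(D)}G)$. **Semi-interlaced and sutures.** Daughter polytopes $D_1,\dots,D_n$ of $\mathbf P\subset\mathbb Z^n$ are semi-interlaced if every face $F$ of $P$ meets at least $\dim F$ of them. A suture is a face meeting exactly $\dim F$ of them. *)

From HB Require Import structures.
From mathcomp Require Import all_boot all_order all_algebra.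
From mathcomp Require Import boolp classical_sets reals.
Set Implicit Arguments. Unset Strict Implicit. Unset Printing Implicit Defensive.
Import Order.TTheory GRing.Theory Num.Theory.
Local Open Scope ring_scope.
Local Open Scope classical_set_scope.

Section Defs.
Variables (R : realType) (n : nat).
Notation pt := 'rV[R]_n.

Definition dotv (a x : pt) : R := \sum_(t < n) a 0 t * x 0 t.

Definition conv (s : seq pt) : set pt :=
  [set x | exists w : 'I_(size s) -> R,
      (forall i, 0 <= w i) /\ \sum_i w i = 1 /\ x = \sum_i w i *: s`_i].

(* (Nonempty) faces of a convex set K: intersections with supporting
   hyperplanes (a = 0, c = 0 gives K itself). *)
Definition face_of (K F : set pt) : Prop :=
  F !=set0 /\ exists (a : pt) (c : R),
    (forall x, K x -> dotv a x <= c) /\ F = [set x | K x /\ dotv a x = c].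

(* affdim S d : the affine hull of S has dimension d. *)
Definition affdim (S : set pt) (d : nat) : Prop :=
  (exists x : 'I_d.+1 -> pt, (forall i, S (x i)) /\
     \rank (\matrix_(i < d) (x (lift ord0 i) - x ord0)) = d) /\
  (forall x : 'I_d.+2 -> pt, (forall i, S (x i)) ->
     (\rank (\matrix_(i < d.+1) (x (lift ord0 i) - x ord0)) <= d)%N).

(* D(D): inclusion-maximal faces of P = conv PP disjoint from D. *)
Definition disj_faces (PP : seq pt) (D : set pt) : set (set pt) :=
  [set G | face_of (conv PP) G /\ G `&` D = set0 /\
     forall G', face_of (conv PP) G' -> G' `&` D = set0 -> G `<=` G' -> G' = G].

Definition daughter (PP : seq pt) (D : set pt) : Prop :=
  D !=set0 /\ (exists s : seq pt, all (mem PP) s /\ D = conv s) /\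
  (forall G1 G2, disj_faces PP D G1 -> disj_faces PP D G2 -> G1 <> G2 ->
      G1 `&` G2 = set0) /\
  D = conv [seq x <- PP | `[< ~ (exists G, disj_faces PP D G /\ G x) >]].

Definition meet_count N (D : 'I_N -> set pt) (F : set pt) : nat :=
  #|[set i : 'I_N | `[< F `&` D i !=set0 >]]|.

Definition semi_interlaced (PP : seq pt) (D : 'I_n -> set pt) : Prop :=
  (forall i, daughter PP (D i)) /\
  (forall F, face_of (conv PP) F -> forall d, affdim F d -> (d <= meet_count D F)%N).

Definition suture (PP : seq pt) (D : 'I_n -> set pt) (F : set pt) : Prop :=
  face_of (conv PP) F /\ exists d, affdim F d /\ meet_count D F = d.

Definition vface (C P F : set pt) : Prop :=
  face_of P F /\ exists Q d, face_of C Q /\ F `<=` Q /\ affdim F d /\ affdim Q d.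

End Defs.

(* C = C_Delta (+) R^k in R^(m+k), C_Delta generated by the (independent)
   rows of V : 'M_m; E j = facet {lambda_j = 0}. *)
Section Cone.
Variables (R : realType) (m k : nat) (V : 'M[R]_m).

Definition simpcone : set 'rV[R]_(m + k) :=
  [set x | exists l : 'rV[R]_m, (forall t, 0 <= l 0 t) /\ lsubmx x = l *m V].

Definition cfacet (j : 'I_m) : set 'rV[R]_(m + k) :=
  [set x | exists l : 'rV[R]_m, (forall t, 0 <= l 0 t) /\ l 0 j = 0 /\
     lsubmx x = l *m V].

Definition offcoord (PP : seq 'rV[R]_(m + k)) (i : 'I_(m + k)) : set 'rV[R]_(m + k) :=
  match split i with
  | inl j => conv [seq x <- PP | `[< ~ cfacet j x >]]
  | inr _ => conv PP
  end.
End Cone.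

(* In the barycentric coordinates [lam j] of the simplicial factor, the cone C
   is the orthant [R^m_+ x R^k] and its faces are the coordinate faces
   [{lam j = 0, j in S}], of dimension [m + k - #|S|].  The polytope
   [D_j = Conv (PP \ E_j)] lies in [{lam j > 0}], while a face F of P not
   contained in [E_j] contains a generator outside [E_j]; hence F meets [D_j]
   iff [F] is not contained in [E_j].  Consequently [P `&` E_j] is the unique
   maximal face of P disjoint from [D_j], and the number of [D_i] meeting F is
   [m + k - #|S(F)|] with [S(F) = {j | F <= E_j}], the dimension of the minimal
   face of C containing F.  Since that face contains F, the count bounds
   [dim F], with equality exactly for V-faces. *)

From HB Require Import structures.
From mathcomp Require Import all_boot all_order all_algebra.
From mathcomp Require Import boolp classical_sets reals.
From mathcomp Require Import lra.
Import Order.TTheory GRing.Theory Num.Theory.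
Local Open Scope ring_scope.
Local Open Scope classical_set_scope.

Set Implicit Arguments. Unset Strict Implicit. Unset Printing Implicit Defensive.

Section LinearForms.
Variables (R : realType) (n : nat).
Implicit Types (a x y : 'rV[R]_n).

Lemma dotvE a x : dotv a x = (x *m a^T) 0 0.
Proof. by rewrite /dotv mxE; apply: eq_bigr => t _; rewrite mxE mulrC. Qed.

Lemma dotvNl a x : dotv (- a) x = - dotv a x.
Proof. by rewrite !dotvE linearN /= mulmxN mxE. Qed.

Lemma dotv_suml (I : finType) (P : pred I) (b : I -> 'rV[R]_n) x :
  dotv (\sum_(i | P i) b i) x = \sum_(i | P i) dotv (b i) x.
Proof.
rewrite dotvE linear_sum /= mulmx_sumr summxE.
by apply: eq_bigr => i _; rewrite dotvE.
Qed.

Lemma dotv_sumr p (w : 'I_p -> R) (y : 'I_p -> 'rV[R]_n) a :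
  dotv a (\sum_i w i *: y i) = \sum_i w i * dotv a (y i).
Proof.
rewrite /dotv; under eq_bigr => t _ do rewrite summxE big_distrr /=.
rewrite exchange_big; apply: eq_bigr => i _; rewrite big_distrr.
by apply: eq_bigr => t _; rewrite mxE mulrCA.
Qed.

Lemma dotv_delta a t : dotv (delta_mx 0 t) a = a 0 t.
Proof.
rewrite /dotv (bigD1 t) //= big1 => [|i /negbTE ti]; last by rewrite mxE ti andbF mul0r.
by rewrite mxE !eqxx mul1r addr0.
Qed.

Lemma dotv_scale_delta a r t : dotv a (r *: delta_mx 0 t) = r * a 0 t.
Proof.
rewrite /dotv (bigD1 t) //= big1 => [|i /negbTE ti]; last by rewrite !mxE ti andbF !mulr0.
by rewrite !mxE !eqxx mulr1 addr0 mulrC.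
Qed.

Lemma dotv_le0 a y : (forall t, a 0 t * y 0 t <= 0) -> dotv a y <= 0.
Proof. by move=> le0; apply: sumr_le0 => t _. Qed.

Lemma dotv_eq0 a y : (forall t, a 0 t * y 0 t <= 0) ->
  dotv a y = 0 <-> forall t, a 0 t * y 0 t = 0.
Proof.
move=> le0; split=> [ay0 t|eq0]; last by rewrite /dotv big1.
have ge0 s : true -> 0 <= - (a 0 s * y 0 s) by rewrite oppr_ge0.
have /(psumr_eq0P ge0)/(_ t isT)/eqP : \sum_s - (a 0 s * y 0 s) = 0.
  by rewrite sumrN -/(dotv a y) ay0 oppr0.
by rewrite oppr_eq0 => /eqP.
Qed.

End LinearForms.

Lemma dotvMr (R : realType) n p (a : 'rV[R]_n) (B : 'M[R]_(p, n)) (u : 'rV[R]_p) :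
  dotv a (u *m B) = dotv (a *m B^T) u.
Proof. by rewrite !dotvE trmx_mul trmxK mulmxA. Qed.

Section ConvexHull.
Variables (R : realType) (n : nat).
Implicit Types (s : seq 'rV[R]_n) (a x y : 'rV[R]_n) (F K : set 'rV[R]_n).

Lemma mem_conv s x : x \in s -> conv s x.
Proof.
move=> xs; pose i0 := Ordinal (etrans (index_mem x s) xs).
exists (fun i => (i == i0)%:R); split=> [i|]; first exact: ler0n.
split; first by rewrite (bigD1 i0) //= eqxx big1 ?addr0 // => i /negbTE ->.
rewrite (bigD1 i0) //= eqxx scale1r big1 ?addr0 ?nth_index //.
by move=> i /negbTE ->; rewrite scale0r.
Qed.

Lemma face_sub K F : face_of K F -> F `<=` K.
Proof. by case=> _ [a [c [_ ->]]] x []. Qed.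

Lemma conv_dotv_ge0 s a x :
  (forall y, y \in s -> 0 <= dotv a y) -> conv s x -> 0 <= dotv a x.
Proof.
move=> ge0 [w [w0 [_ ->]]]; rewrite dotv_sumr; apply: sumr_ge0 => i _.
by rewrite mulr_ge0 // ge0 // mem_nth.
Qed.

Lemma conv_dotv_gt0 s a x :
  (forall y, y \in s -> 0 < dotv a y) -> conv s x -> 0 < dotv a x.
Proof.
move=> gt0 [w [w0 [w1 ->]]].
have as_gt0 (i : 'I_(size s)) : 0 < dotv a s`_i by rewrite gt0 ?mem_nth.
have term_ge0 i : true -> 0 <= w i * dotv a s`_i.
  by move=> _; exact: mulr_ge0 (w0 i) (ltW (as_gt0 i)).
rewrite dotv_sumr lt_def (sumr_ge0 _ term_ge0) andbT; apply/eqP => sum_eq0.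
have w_eq0 := psumr_eq0P term_ge0 sum_eq0.
suff w_zero : \sum_i w i = 0 by move/eqP: w1; rewrite w_zero eq_sym oner_eq0.
apply: big1 => i _.
by have /eqP := w_eq0 i isT; rewrite mulf_eq0 (gt_eqF (as_gt0 i)) orbF => /eqP.
Qed.

(* The slacks [c - dotv a s`_i] are nonnegative and their weighted sum vanishes. *)
Lemma face_conv_support s F (w : 'I_(size s) -> R) :
  face_of (conv s) F -> (forall i, 0 <= w i) -> \sum_i w i = 1 ->
  F (\sum_i w i *: s`_i) -> forall i, 0 < w i -> F s`_i.
Proof.
case=> _ [a [c [le_c ->]]] w0 w1 [_ ec] i wi.
have conv_s (t : 'I_(size s)) : conv s s`_t by apply/mem_conv/mem_nth.
have slack_ge0 t : true -> 0 <= w t * (c - dotv a s`_t).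
  by rewrite mulr_ge0 // subr_ge0 le_c.
have slack_eq0 : \sum_t w t * (c - dotv a s`_t) = 0.
  under eq_bigr => t _ do rewrite mulrBr.
  by rewrite sumrB -big_distrl /= w1 mul1r -dotv_sumr ec subrr.
have /(_ i isT)/eqP := psumr_eq0P slack_ge0 slack_eq0.
rewrite mulf_eq0 gt_eqF //= subr_eq0 => /eqP ec_i.
by split.
Qed.

Lemma face_conv_dotv_gt0 s F a x :
  face_of (conv s) F -> (forall y, y \in s -> 0 <= dotv a y) ->
  F x -> 0 < dotv a x -> exists2 y, y \in s & F y /\ 0 < dotv a y.
Proof.
move=> Ff ge0 Fx ax_gt0; have [w [w0 [w1 ex]]] := face_sub Ff Fx.
have [i wa_gt0] : exists i, 0 < w i * dotv a s`_i.
  apply: contrapT => hn; move: ax_gt0; rewrite ex dotv_sumr ltNge sumr_le0 // => i _.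
  by rewrite leNgt; apply/negP => pos; apply: hn; exists i.
have ge0_i : 0 <= dotv a s`_i by rewrite ge0 ?mem_nth.
have wi_gt0 : 0 < w i.
  by rewrite lt_def w0 andbT; apply: contraTneq wa_gt0 => ->; rewrite mul0r ltxx.
exists s`_i; first exact: mem_nth.
split; first by apply: face_conv_support wi_gt0; rewrite // -ex.
by rewrite lt_def ge0_i andbT; apply: contraTneq wa_gt0 => ->; rewrite mulr0 ltxx.
Qed.

End ConvexHull.

Lemma rank_rowsub_id (F : fieldType) p q (f : 'I_p -> 'I_q) :
  injective f -> \rank (rowsub f (1%:M : 'M[F]_q)) = p.
Proof.
move=> f_inj; apply/eqP; rewrite eqn_leq rank_leq_row /=.
have orthonormal : (1%:M : 'M[F]_p) = rowsub f 1%:M *m (rowsub f 1%:M)^T.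
  apply/matrixP => i j; rewrite !mxE (bigD1 (f i)) //= big1 => [|t /negbTE ti].
    by rewrite !mxE eqxx addr0 mul1r (inj_eq f_inj) eq_sym.
  by rewrite !mxE (eq_sym (f i)) ti mul0r.
by rewrite -[leqLHS](mxrank1 F p) orthonormal mxrankM_maxl.
Qed.

Lemma rank_col_support (F : fieldType) p q (T : {set 'I_q}) (B : 'M[F]_(p, q)) :
  (forall r c, c \notin T -> B r c = 0) -> (\rank B <= #|T|)%N.
Proof.
move=> B_supp; pose PT := rowsub (@enum_val _ (mem T)) (1%:M : 'M[F]_q).
suff -> : B = B *m PT^T *m PT by apply: leq_trans (mxrankM_maxr _ _) (rank_leq_row _).
apply/matrixP => r c; rewrite !mxE.
under eq_bigr => i _.
  rewrite !mxE (bigD1 (enum_val i)) //= big1 => [|t /negbTE ti]; last first.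
    by rewrite !mxE eq_sym ti mulr0.
  rewrite !mxE eqxx mulr1 addr0.
over.
have [cT|cT] := boolP (c \in T); last first.
  rewrite B_supp // big1 // => i _; case: eqP => [e|_]; last by rewrite mulr0.
  by move: cT; rewrite -e enum_valP.
rewrite (bigD1 (enum_rank_in cT c)) //= enum_rankK_in // eqxx mulr1 big1 ?addr0 //.
move=> i ic; case: eqP => [e|_]; last by rewrite mulr0.
have ei : i = enum_rank_in cT c by apply: enum_val_inj; rewrite enum_rankK_in.
by rewrite ei eqxx in ic.
Qed.

Lemma affdim_le_subset (R : realType) n (S T : set 'rV[R]_n) d c :
  S `<=` T -> affdim S d -> affdim T c -> (d <= c)%N.
Proof.
move=> ST [[x [xS rk]] _] [_ hT]; rewrite leqNgt; apply/negP => lt_cd.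
have le1 : (c.+2 <= d.+1)%N by [].
have le2 : (c.+1 <= d)%N by [].
have := hT (fun i => x (widen_ord le1 i)) (fun i => ST _ (xS _)).
have -> : \matrix_(i < c.+1) (x (widen_ord le1 (lift ord0 i)) - x (widen_ord le1 ord0))
   = rowsub (widen_ord le2) (\matrix_(i < d) (x (lift ord0 i) - x ord0)).
  apply/matrixP => i j; rewrite !mxE.
  have -> : widen_ord le1 (lift ord0 i) = lift ord0 (widen_ord le2 i) by apply: val_inj.
  by have -> : widen_ord le1 ord0 = ord0 by apply: val_inj.
rewrite rowsubE mxrankMfree; last by rewrite /row_free rk.
by rewrite rank_rowsub_id ?ltnn // => a b /(congr1 val) /= /val_inj.
Qed.

Section SimplicialCone.
Variables (R : realType) (m k : nat) (V : 'M[R]_m).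
Hypothesis V_unit : V \in unitmx.
Notation pt := 'rV[R]_(m + k).
Notation C := (@simpcone R m k V).
Notation E := (@cfacet R m k V).
Implicit Types (x y g : pt) (S : {set 'I_m}).

(* In the coordinates [coords x] the cone [C] becomes [R^m_+ x R^k]; [lam j]
   is the [j]-th barycentric coordinate, which vanishes exactly on [E j]. *)
Definition coordmx : 'M[R]_(m + k) := block_mx (invmx V) 0 0 1%:M.
Definition pointmx : 'M[R]_(m + k) := block_mx V 0 0 1%:M.
Definition coords x := x *m coordmx.
Definition lam j x := coords x 0 (lshift k j).
Definition lamform j : pt := delta_mx 0 (lshift k j) *m coordmx^T.
Definition orthant : set pt := [set y | forall j, 0 <= y 0 (lshift k j)].

Lemma coordsE x : coords x = row_mx (lsubmx x *m invmx V) (rsubmx x).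
Proof.
by rewrite /coords -{1}(hsubmxK x) mul_row_block !mulmx0 addr0 add0r mulmx1.
Qed.

Lemma lamE j x : lam j x = (lsubmx x *m invmx V) 0 j.
Proof. by rewrite /lam coordsE row_mxEl. Qed.

Lemma mul_coordmx_pointmx : coordmx *m pointmx = 1%:M.
Proof.
rewrite mulmx_block !mulmx0 !mul0mx !addr0 !add0r mulmx1 mulVmx //.
by rewrite -scalar_mx_block.
Qed.

Lemma mul_pointmx_coordmx : pointmx *m coordmx = 1%:M.
Proof.
rewrite mulmx_block !mulmx0 !mul0mx !addr0 !add0r mulmx1 mulmxV //.
by rewrite -scalar_mx_block.
Qed.

Lemma pointmx_unit : pointmx \in unitmx.
Proof. by case: (mulmx1_unit mul_pointmx_coordmx). Qed.

Lemma coordsK x : coords x *m pointmx = x.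
Proof. by rewrite /coords -mulmxA mul_coordmx_pointmx mulmx1. Qed.

Lemma coords_point y : coords (y *m pointmx) = y.
Proof. by rewrite /coords -mulmxA mul_pointmx_coordmx mulmx1. Qed.

Lemma simpconeP x : C x <-> forall j, 0 <= lam j x.
Proof.
split=> [[l [l_ge0 xl]] j | lam_ge0]; first by rewrite lamE xl mulmxK.
by exists (lsubmx x *m invmx V); split=> [j|]; rewrite ?mulmxKV // -lamE.
Qed.

Lemma cfacetP j x : E j x <-> C x /\ lam j x = 0.
Proof.
split=> [[l [l_ge0 [lj0 xl]]] | [/simpconeP lam_ge0 lam0]].
  by split; [exists l | rewrite lamE xl mulmxK].
by exists (lsubmx x *m invmx V); split=> [t|]; rewrite ?mulmxKV // -lamE.
Qed.

Lemma dotv_coordform g x : dotv (g *m coordmx^T) x = dotv g (coords x).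
Proof. by rewrite !dotvE trmx_mul trmxK mulmxA. Qed.

Lemma lam_dotv j x : lam j x = dotv (lamform j) x.
Proof. by rewrite dotv_coordform dotv_delta. Qed.

Lemma lam_gt0 j x : C x -> ~ E j x -> 0 < lam j x.
Proof.
move=> Cx nEx; rewrite lt_def ((simpconeP x).1 Cx) andbT.
by apply/eqP => lam0; apply: nEx; apply/cfacetP.
Qed.

Lemma lam0 j : lam j 0 = 0.
Proof. by rewrite /lam /coords mul0mx mxE. Qed.

Lemma simpcone0 : C 0.
Proof. by apply/simpconeP => j; rewrite lam0. Qed.

Lemma orthant_support g c : (forall y, orthant y -> dotv g y <= c) ->
  [/\ 0 <= c, forall j, g 0 (lshift k j) <= 0 & forall t, g 0 (rshift m t) = 0].
Proof.
move=> le_c; have at_delta t r : orthant (r *: delta_mx 0 t) -> r * g 0 t <= c.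
  by move=> /le_c; rewrite dotv_scale_delta.
have c_ge0 : 0 <= c.
  by have := le_c 0; rewrite dotvE mul0mx mxE; apply=> j; rewrite mxE.
have orthant_delta_l r j : 0 <= r -> orthant (r *: delta_mx 0 (lshift k j)).
  by move=> r_ge0 j'; rewrite !mxE mulr_ge0 ?ler0n.
have orthant_delta_r r t : orthant (r *: delta_mx 0 (rshift m t)).
  by move=> j'; rewrite !mxE eq_lrshift andbF mulr0.
split=> // [j|t].
  rewrite leNgt; apply/negP => g_gt0.
  have r_ge0 : 0 <= (c + 1) / g 0 (lshift k j) by rewrite divr_ge0 ?ltW //; lra.
  have := at_delta _ _ (orthant_delta_l _ j r_ge0).
  by rewrite mulfVK ?gt_eqF //; lra.
apply/eqP/contraT => g_neq0.
have := at_delta _ _ (orthant_delta_r ((c + 1) / g 0 (rshift m t)) t).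
by rewrite mulfVK //; lra.
Qed.

Definition coord_face S : set pt :=
  [set x | C x /\ forall j, j \in S -> lam j x = 0].

Lemma coord_face_face S : face_of C (coord_face S).
Proof.
split; first by exists 0; split=> [|j _]; [exact: simpcone0 | exact: lam0].
exists (- \sum_(j in S) lamform j), 0.
have dotv_form x : dotv (- \sum_(j in S) lamform j) x = - \sum_(j in S) lam j x.
  by rewrite dotvNl dotv_suml; congr (- _); apply: eq_bigr => j _; rewrite lam_dotv.
split; first by move=> x /simpconeP lam_ge0; rewrite dotv_form oppr_le0 sumr_ge0.
rewrite predeqE => x /=; rewrite dotv_form; split=> [[Cx lamS0] | [Cx /eqP]].
  by split=> //; rewrite big1 ?oppr0.
rewrite oppr_eq0 => /eqP sum0; split=> // j jS.
by move/simpconeP: Cx => lam_ge0; apply: (psumr_eq0P (fun j _ => lam_ge0 j) sum0).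
Qed.

Lemma face_coord_face Q : face_of C Q -> exists S, Q = coord_face S.
Proof.
case=> [[x0 Qx0] [a [c [le_c eQ]]]]; rewrite eQ in Qx0 *.
pose g := a *m pointmx^T.
have dotv_g x : dotv a x = dotv g (coords x) by rewrite -dotvMr coordsK.
have [c_ge0 gl_le0 gr0] :
    [/\ 0 <= c, forall j, g 0 (lshift k j) <= 0 & forall t, g 0 (rshift m t) = 0].
  apply: orthant_support => y y_orth; rewrite -(coords_point y) -dotv_g; apply: le_c.
  by apply/simpconeP => j; rewrite /lam coords_point.
have prod_le0 x : C x -> forall t, g 0 t * coords x 0 t <= 0.
  move=> /simpconeP x_orth t.
  case: (split_ordP t) => [j ->|t' ->]; last by rewrite gr0 mul0r.
  exact: mulr_le0_ge0 (gl_le0 j) (x_orth j).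
have c0 : c = 0.
  case: Qx0 => Cx0 ax0; apply/eqP; rewrite eq_le c_ge0 andbT -ax0 dotv_g.
  exact: dotv_le0 (prod_le0 _ Cx0).
exists [set j | g 0 (lshift k j) != 0]%SET; rewrite c0 predeqE => x /=.
split=> [[Cx] | [Cx lamS0]]; rewrite dotv_g.
  move/(dotv_eq0 (prod_le0 _ Cx)) => prod0; split=> // j; rewrite inE => gj.
  by have /eqP := prod0 (lshift k j); rewrite mulf_eq0 (negbTE gj) /= => /eqP.
split=> //; apply/(dotv_eq0 (prod_le0 _ Cx)) => t.
case: (split_ordP t) => [j ->|t' ->]; last by rewrite gr0 mul0r.
have [/eqP -> | gj] := boolP (g 0 (lshift k j) == 0); first by rewrite mul0r.
have -> : coords x 0 (lshift k j) = 0 by apply: lamS0; rewrite inE.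
by rewrite mulr0.
Qed.

Definition free_coords S : {set 'I_(m + k)} :=
  [set t | if split t is inl j then j \notin S else true]%SET.

Lemma affdim_coord_face S : affdim (coord_face S) #|free_coords S|.
Proof.
pose f := @enum_val _ (mem (free_coords S)).
pose vertex i : pt := delta_mx 0 (f i) *m pointmx.
split.
  exists (fun i => if unlift ord0 i is Some i' then vertex i' else 0); split.
    move=> i; case: (unlift ord0 i) => [i'|]; last first.
      by split=> [|j _]; [exact: simpcone0 | exact: lam0].
    have lam_vertex j : lam j (vertex i') = (lshift k j == f i')%:R.
      by rewrite /lam coords_point mxE eqxx.
    split=> [|j jS]; first by apply/simpconeP => j; rewrite lam_vertex ler0n.
    rewrite lam_vertex; case: eqP => // fi; have := enum_valP i'.
    by rewrite -/(f i') -fi inE -[lshift k j]/(unsplit (inl j)) unsplitK jS.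
  set M := \matrix_(i < _) _; have -> : M = rowsub f 1%:M *m pointmx.
    apply/row_matrixP => i.
    by rewrite rowK liftK unlift_none subr0 -rowsubE row_rowsub rowE.
  rewrite mxrankMfree ?rank_rowsub_id ?row_free_unit ?pointmx_unit //.
  exact: enum_val_inj.
move=> y yQ; set A := \matrix_(i < _) _.
rewrite -[A]mulmx1 -mul_coordmx_pointmx mulmxA; apply: leq_trans (mxrankM_maxl _ _) _.
apply: rank_col_support => r c; rewrite inE.
case: (split_ordP c) => [j ->|t ->] //; rewrite negbK => jS.
have [[_ lam_r0] [_ lam_00]] := (yQ (lift ord0 r), yQ ord0).
have -> : (A *m coordmx) r (lshift k j) = coords (row r A) 0 (lshift k j).
  by rewrite /coords -row_mul [RHS]mxE.
move: (lam_r0 j jS) (lam_00 j jS).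
have entryB (u v : pt) t : (u - v) 0 t = u 0 t - v 0 t by rewrite !mxE.
by rewrite rowK /lam /coords mulmxBl entryB => -> ->; rewrite subrr.
Qed.

Definition facets_containing (F : set pt) : {set 'I_m} :=
  [set j | `[< F `<=` E j >]]%SET.

Lemma sub_coord_face_facets F : F `<=` C -> F `<=` coord_face (facets_containing F).
Proof.
move=> FC x Fx; split=> [|j]; first exact: FC.
by rewrite inE => /asboolP /(_ x Fx) /cfacetP [].
Qed.

Lemma coord_face_facets_min F Q :
  face_of C Q -> F `<=` Q -> coord_face (facets_containing F) `<=` Q.
Proof.
move=> /face_coord_face [S ->] FQ x [Cx lam0]; split=> // j jS; apply: lam0.
by rewrite inE; apply/asboolP => y /FQ [Cy lamy0]; apply/cfacetP; rewrite lamy0.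
Qed.

End SimplicialCone.

Section OffCoordinatePolytopes.
Variables (R : realType) (m k : nat) (V : 'M[R]_m).
Hypothesis V_unit : V \in unitmx.
Notation pt := 'rV[R]_(m + k).
Notation C := (@simpcone R m k V).
Notation E := (@cfacet R m k V).
Variable PP : seq pt.
Hypothesis PP_cone : forall x, x \in PP -> C x.
Notation P := (conv PP).
Notation lam := (lam V).
Notation lamform := (lamform k V).
Implicit Types (F G : set pt).

Definition off_facet j := conv [seq x <- PP | `[< ~ E j x >]].

Lemma conv_cone : P `<=` C.
Proof.
move=> x Px; apply/(simpconeP V_unit) => j; rewrite lam_dotv.
apply: conv_dotv_ge0 Px => y /PP_cone /(simpconeP V_unit) lam_ge0.
by rewrite -lam_dotv.
Qed.

Lemma lam_off_facet_gt0 j y : off_facet j y -> 0 < lam j y.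
Proof.
rewrite lam_dotv; apply: conv_dotv_gt0 => x; rewrite mem_filter -lam_dotv.
by case/andP => /asboolP nEx /PP_cone Cx; apply: lam_gt0.
Qed.

Lemma face_meets_off_facet j F :
  face_of P F -> (F `&` off_facet j !=set0 <-> ~ F `<=` E j).
Proof.
move=> Ff; split=> [[y [Fy Dy]] FE | /existsNP [x /not_implyP [Fx nEx]]].
  have := lam_off_facet_gt0 Dy.
  by case/(cfacetP V_unit): (FE _ Fy) => // _ ->; rewrite ltxx.
have lamPP_ge0 y : y \in PP -> 0 <= dotv (lamform j) y.
  by move=> /PP_cone /(simpconeP V_unit) lam_ge0; rewrite -lam_dotv.
have : 0 < dotv (lamform j) x.
  by rewrite -lam_dotv; apply: (lam_gt0 V_unit) nEx; exact: conv_cone (face_sub Ff Fx).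
case/(face_conv_dotv_gt0 Ff lamPP_ge0 Fx) => y yPP [Fy y_gt0].
exists y; split=> //; apply: mem_conv; rewrite mem_filter yPP andbT.
apply/asboolP => /(cfacetP V_unit) [] // _; rewrite lam_dotv => y0.
by rewrite y0 ltxx in y_gt0.
Qed.

Lemma facet_face j : P `&` E j !=set0 -> face_of P (P `&` E j).
Proof.
move=> ne; split=> //; exists (- lamform j), 0; split.
  by move=> x /conv_cone /(simpconeP V_unit) lam_ge0; rewrite dotvNl -lam_dotv oppr_le0.
rewrite predeqE => x /=; rewrite dotvNl -lam_dotv.
split=> [[Px /(cfacetP V_unit) [_ ->]] | [Px /eqP]]; first by rewrite oppr0.
rewrite oppr_eq0 => /eqP lam0; split=> //; apply/(cfacetP V_unit); split=> //.
exact: conv_cone.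
Qed.

Lemma face_sub_facet j G : face_of P G -> G `&` off_facet j = set0 -> G `<=` E j.
Proof.
by move=> Gf GD; apply: contrapT => /(face_meets_off_facet j Gf) [y]; rewrite GD.
Qed.

Lemma facet_disj_off_facet j : (P `&` E j) `&` off_facet j = set0.
Proof.
rewrite -subset0 => y [[_ Ey] /lam_off_facet_gt0].
by case/(cfacetP V_unit): Ey => _ ->; rewrite ltxx.
Qed.

Lemma disj_faces_off_facet j : disj_faces PP (off_facet j) =
  if `[< P `&` E j !=set0 >] then [set P `&` E j] else set0.
Proof.
have sub_facet G : face_of P G -> G `&` off_facet j = set0 -> G `<=` P `&` E j.
  by move=> Gf GD x Gx; split; [exact: face_sub Gf _ Gx | exact: face_sub_facet Gf GD _ Gx].
case: asboolP => ne; rewrite predeqE => G; split=> [[Gf [GD Gmax]]|] //.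
- by apply/esym/Gmax; [exact: facet_face | exact: facet_disj_off_facet | exact: sub_facet].
- move=> ->; split; first exact: facet_face.
  split=> [|G' G'f G'D sub]; first exact: facet_disj_off_facet.
  by apply/seteqP; split=> //; exact: sub_facet.
- by apply: ne; have [x Gx] := Gf.1; exists x; exact: sub_facet Gf GD x Gx.
Qed.

Lemma daughter_off_facet j :
  ~ (forall x, x \in PP -> E j x) -> daughter PP (off_facet j).
Proof.
move=> /existsNP [x0 /not_implyP [x0PP nEx0]].
split; first by exists x0; apply: mem_conv; rewrite mem_filter x0PP andbT; exact/asboolP.
split.
  exists [seq x <- PP | `[< ~ E j x >]]; split=> //.
  by apply/allP => x; rewrite mem_filter => /andP [].
rewrite disj_faces_off_facet; split; first by case: asboolP => _ G1 G2 // -> ->.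
congr conv; apply: eq_in_filter => x xPP.
have PEx : (P `&` E j) x <-> E j x by split=> [[]|] //; split=> //; exact: mem_conv.
case: (asboolP (P `&` E j !=set0)) => ne.
all: apply/asboolP/asboolP => [nEx [G []] | nG Ex].
- by move=> -> /PEx.
- by apply: nG; exists (P `&` E j); split=> //; exact/PEx.
- by [].
- by apply: ne; exists x; exact/PEx.
Qed.

Lemma disj_faces_conv : disj_faces PP P = set0.
Proof.
rewrite -subset0 => G [Gf [GP _]]; have [x Gx] := Gf.1.
have : (G `&` P) x by split; [|exact: face_sub Gf _ Gx].
by rewrite GP.
Qed.

Lemma daughter_conv : PP != [::] -> daughter PP P.
Proof.
move=> PP_ne; split.
  by case: PP PP_ne => // x0 s _; exists x0; apply: mem_conv; rewrite inE eqxx.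
split; first by exists PP; split=> //; apply/allP.
rewrite disj_faces_conv; split=> [G1 G2 []|]; congr conv.
by apply/esym/all_filterP/allP => x _; apply/asboolP => -[G [[]]].
Qed.

Lemma meet_count_offcoord F : face_of P F ->
  meet_count (offcoord V PP) F = #|free_coords k (facets_containing V F)|.
Proof.
move=> Ff; apply: eq_card => i; rewrite {1}/in_mem /= /in_set asboolb.
suff meets : F `&` offcoord V PP i !=set0 <-> i \in free_coords k (facets_containing V F).
  by apply/asboolP/idP => /meets.
rewrite /offcoord inE; case: (split i) => [j|t].
  by rewrite /facets_containing inE -asbool_neg (face_meets_off_facet j Ff); split=> /asboolP.
by split=> // _; have [[x Fx] _] := Ff; exists x; split=> //; exact: face_sub Ff _ Fx.
Qed.

Lemma daughter_offcoord i :
  PP != [::] -> (forall j, ~ (forall x, x \in PP -> E j x)) ->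
  daughter PP (offcoord V PP i) /\
  disj_faces PP (offcoord V PP i) =
    match split i with
    | inl j => if `[< P `&` E j !=set0 >] then [set P `&` E j] else set0
    | inr _ => set0
    end.
Proof.
move=> PP_ne PP_facets; rewrite /offcoord; case: (split i) => [j|t].
  by split; [exact: daughter_off_facet | exact: disj_faces_off_facet].
by split; [exact: daughter_conv | exact: disj_faces_conv].
Qed.

End OffCoordinatePolytopes.

Theorem mainTheorem8 (R : realType) (m k : nat) (V : 'M[R]_m)
  (PP : seq 'rV[R]_(m + k)) :
  V \in unitmx ->
  PP != [::] ->
  (forall x, x \in PP -> forall t, x 0 t \is a Num.int) ->
  (forall x, x \in PP -> @simpcone R m k V x) ->
  (forall j : 'I_m, ~ (forall x, x \in PP -> @cfacet R m k V j x)) ->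
  let C := @simpcone R m k V in
  let P := conv PP in
  let D := offcoord V PP in
  (* 1 *)
  (forall i, daughter PP (D i) /\
     disj_faces PP (D i) =
       match split i with
       | inl j => if `[< P `&` @cfacet R m k V j !=set0 >]
                  then [set P `&` @cfacet R m k V j] else set0
       | inr _ => set0
       end) /\
  (* 2 *)
  (forall F, face_of P F ->
     let minface Q := face_of C Q /\ F `<=` Q /\
        (forall Q', face_of C Q' -> F `<=` Q' -> Q' `<=` Q -> Q' = Q) in
     (exists Q, minface Q) /\
     (forall Q, minface Q -> affdim Q (meet_count D F))) /\
  (* 3 *)
  semi_interlaced PP D /\
  (forall F, suture PP D F <-> vface C P F).
Proof.
move=> V_unit PP_ne _ PP_cone PP_facets C P D.
have daughters i := daughter_offcoord V_unit PP_cone i PP_ne PP_facets.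
pose Qmin (F : set 'rV[R]_(m + k)) : set 'rV[R]_(m + k) :=
  coord_face V (facets_containing V F).
have Qmin_face F : face_of C (Qmin F) by exact: coord_face_face.
have F_Qmin F : face_of P F -> F `<=` Qmin F.
  by move=> Ff; apply: sub_coord_face_facets => // x /(face_sub Ff); exact: conv_cone.
have Qmin_min F Q : face_of C Q -> F `<=` Q -> Qmin F `<=` Q.
  exact: coord_face_facets_min.
have dim_Qmin F : face_of P F -> affdim (Qmin F) (meet_count D F).
  by move=> Ff; rewrite meet_count_offcoord //; exact: affdim_coord_face.
split=> //; split.
  move=> F Ff minface; split.
    exists (Qmin F); split=> //; split=> [|Q' Q'C FQ' Q'Q]; first exact: F_Qmin.
    by apply/seteqP; split=> //; exact: Qmin_min.
  move=> Q [QC [FQ Q_min]].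
  have <- : Qmin F = Q by apply: Q_min; [exact: Qmin_face | exact: F_Qmin | exact: Qmin_min].
  exact: dim_Qmin.
split.
  split=> [i|F Ff d Fd]; first by case: (daughters i).
  exact: affdim_le_subset (F_Qmin F Ff) Fd (dim_Qmin F Ff).
move=> F; split=> [[Ff [d [Fd cnt]]] | [Ff [Q [d [QC [FQ [Fd Qd]]]]]]]; split=> //.
  exists (Qmin F), d; split=> //; split; first exact: F_Qmin.
  by split=> //; rewrite -cnt; exact: dim_Qmin.
exists d; split=> //; apply/eqP; rewrite eqn_leq.
rewrite (affdim_le_subset (F_Qmin F Ff) Fd (dim_Qmin F Ff)) andbT.
exact: affdim_le_subset (Qmin_min F Q QC FQ) (dim_Qmin F Ff) Qd.
Qed.
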